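(* Let $p>\tfrac12$, $d_\pm\in\mathbb R$, and $d_k=d_+k^{-p}$ for $k>0$, $d_k=d_-|k|^{-p}$ for $k<0$, $d_0=0$. Let $\mathfrak D(x)=\sum_{k\in\mathbb Z}d_k e^{\mathrm i kx}$ (a $2\pi$-periodic distribution). Let $h_0\in C^\infty_c(\mathbb R)$ with $h_0=1$ on $[-\pi,\pi]$ and $\operatorname{supp}h_0\subset[-\tfrac{3\pi}{2},\tfrac{3\pi}{2}]$. Let $\zeta\in C^\infty(\mathbb R)$ vanish in a neighbourhood of $0$ and equal $1$ in a neighbourhood of infinity, let $\delta(\xi)=d_+\xi^{-p}$ for $\xi>0$, $\delta(\xi)=d_-|\xi|^{-p}$ for $\xi<0$, and let $\mathfrak F$ be the tempered distribution with $\widehat{\mathfrak F}=\zeta\delta$. Then the function $\mathfrak D_1=\mathfrak D\,h_0-\mathfrak F$ satisfies \[ \widehat{\mathfrak D_1}(\xi)=o(|\xi|^{-p}),\qquad |\xi|\to\infty. \]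
   Context: The Fourier transform is normalized as $\widehat f(\xi)=\frac1{2\pi}\int_{\mathbb R}f(x)e^{-\mathrm i x\xi}\,dx$ (extended to tempered distributions), so that $\widehat{\mathfrak D h_0}(\xi)=\sum_{k}d_k\widehat{h_0}(\xi-k)$. *)

From Stdlib Require Import Reals Lra ZArith ClassicalEpsilon.
Open Scope R_scope.

Definition smooth (f : R -> R) : Prop :=
  exists D : nat -> R -> R,
    (forall x, D 0%nat x = f x) /\
    (forall n x, derivable_pt_lim (D n) x (D (S n) x)).

Definition is_RInt (f : R -> R) (a b v : R) : Prop :=
  exists pr : Riemann_integrable f a b, RiemannInt pr = v.

Definition RInt (f : R -> R) (a b : R) : R :=
  epsilon (inhabits 0) (fun v => is_RInt f a b v).

Definition zsum (a : Z -> R) : R :=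
  epsilon (inhabits 0) (fun v => infinite_sum (fun n => a (Z.of_nat n)) v)
  + epsilon (inhabits 0)
      (fun v => infinite_sum (fun n => a (- Z.of_nat (S n))%Z) v).

(* Real and imaginary parts of the Fourier transform
   hat f(xi) = 1/(2 pi) int f(x) e^{-i x xi} dx of a real function f
   supported in [-L, L]. *)
Definition FT_re (f : R -> R) (L xi : R) : R :=
  / (2 * PI) * RInt (fun x => f x * cos (x * xi)) (- L) L.
Definition FT_im (f : R -> R) (L xi : R) : R :=
  - (/ (2 * PI) * RInt (fun x => f x * sin (x * xi)) (- L) L).

Definition dcoef (p dp dm : R) (k : Z) : R :=
  if (0 <? k)%Z then dp * Rpower (IZR k) (- p)
  else if (k <? 0)%Z then dm * Rpower (IZR (- k)) (- p)
  else 0.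

(* The homogeneous symbol delta(xi) (value at 0 irrelevant). *)
Definition delta (p dp dm xi : R) : R :=
  if Rlt_dec 0 xi then dp * Rpower xi (- p)
  else if Rlt_dec xi 0 then dm * Rpower (- xi) (- p)
  else 0.

(* hat(D h0)(xi) = sum_k d_k hat h0(xi - k), split in real/imag parts,
   with h0 supported in [-2pi, 2pi]. *)
Definition Dh0_hat_re (p dp dm : R) (h0 : R -> R) (xi : R) : R :=
  zsum (fun k => dcoef p dp dm k * FT_re h0 (2 * PI) (xi - IZR k)).
Definition Dh0_hat_im (p dp dm : R) (h0 : R -> R) (xi : R) : R :=
  zsum (fun k => dcoef p dp dm k * FT_im h0 (2 * PI) (xi - IZR k)).

Definition D1_hat_re (p dp dm : R) (h0 zeta : R -> R) (xi : R) : R :=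
  Dh0_hat_re p dp dm h0 xi - zeta xi * delta p dp dm xi.
Definition D1_hat_im (p dp dm : R) (h0 zeta : R -> R) (xi : R) : R :=
  Dh0_hat_im p dp dm h0 xi.

(* For |xi| large, zeta xi = 1, and Poisson summation gives sum_k hat h0 (xi - k) = h0 0 = 1
   (with vanishing imaginary part), since h0 is supported in |x| < 2 pi.  Hence
     hat D_1 (xi) = sum_k (d_k - delta xi) hat h0 (xi - k).
   As hat h0 decays faster than any power, the terms with k far from xi contribute
   O(|xi|^-m); for k within |xi|/2 of xi the mean value theorem for t^-p gives
   |d_k - delta xi| <= C |xi|^(-p-1) |xi - k|.  So the sum is O(|xi|^(-p-1)) = o(|xi|^-p).
   Poisson summation is proved in its weak form: the Cesaro means of the partial sums of
   sum_k hat h0 (xi - k) are integrals of h0 against the Fejer kernel, which concentrates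
   at 0. *)

From Pilot Require Import Defs.
From Stdlib Require Import Reals ZArith Lra Lia ClassicalEpsilon.
From Coquelicot Require Import Coquelicot.
Open Scope R_scope.

(** * Finite sums and Riemann integrals *)

Fixpoint psum (f : nat -> R) (n : nat) : R :=
  match n with O => 0 | S n => psum f n + f n end.

Lemma psum_ext f g n : (forall i, (i < n)%nat -> f i = g i) -> psum f n = psum g n.
Proof. induction n; intros H; simpl; auto. rewrite IHn, H; auto. Qed.

Lemma psum_plus f g n : psum (fun i => f i + g i) n = psum f n + psum g n.
Proof. induction n; simpl; [ring | rewrite IHn; ring]. Qed.

Lemma psum_scal c f n : psum (fun i => c * f i) n = c * psum f n.
Proof. induction n; simpl; [ring | rewrite IHn; ring]. Qed.

Lemma psum_psum_scal c (f : nat -> nat -> R) m n :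
  psum (fun j => psum (fun l => c * f j l) m) n = c * psum (fun j => psum (f j) m) n.
Proof. rewrite <- psum_scal. apply psum_ext. intros; apply psum_scal. Qed.

Lemma psum_scal_r c f n : psum (fun i => f i * c) n = psum f n * c.
Proof. induction n; simpl; [ring | rewrite IHn; ring]. Qed.

Lemma psum_const c n : psum (fun _ => c) n = INR n * c.
Proof. induction n; simpl psum; [simpl; ring | rewrite IHn, S_INR; ring]. Qed.

Lemma psum_le f g n : (forall i, (i < n)%nat -> f i <= g i) -> psum f n <= psum g n.
Proof.
  induction n; intros H; simpl; [lra|].
  pose proof (H n ltac:(lia)). pose proof (IHn ltac:(intros; apply H; lia)). lra.
Qed.

Lemma psum_ge0 f n : (forall i, 0 <= f i) -> 0 <= psum f n.
Proof. intros H; induction n; simpl; [lra | pose proof (H n); lra]. Qed.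

Lemma Rabs_psum_le f n : Rabs (psum f n) <= psum (fun i => Rabs (f i)) n.
Proof.
  induction n; simpl; [rewrite Rabs_R0; lra|].
  pose proof (Rabs_triang (psum f n) (f n)); lra.
Qed.

Lemma psumSl g n : psum g (S n) = g 0%nat + psum (fun i => g (S i)) n.
Proof. induction n; simpl in *; [ring | rewrite IHn; ring]. Qed.

Lemma psum_split g m k : psum g (m + k) = psum g m + psum (fun i => g (m + i)%nat) k.
Proof.
  induction k; simpl; [rewrite Nat.add_0_r; ring|].
  rewrite Nat.add_succ_r; simpl. rewrite IHk; ring.
Qed.

Lemma psum_rev f n : psum (fun l => f (n - 1 - l)%nat) n = psum f n.
Proof.
  induction n; auto. rewrite psumSl.
  replace (S n - 1 - 0)%nat with n by lia.
  rewrite (psum_ext _ (fun l => f (n - 1 - l)%nat)) by (intros; f_equal; lia).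
  rewrite IHn. simpl. ring.
Qed.

Lemma psum_mul f g n : psum f n * psum g n = psum (fun j => psum (fun l => f j * g l) n) n.
Proof. rewrite <- psum_scal_r. apply psum_ext. intros j _. rewrite <- psum_scal. reflexivity. Qed.

Lemma psum_delta c j n : (j < n)%nat -> psum (fun l => if Nat.eq_dec j l then c else 0) n = c.
Proof.
  induction n; intros H; [lia|]. simpl.
  destruct (Nat.eq_dec j n).
  - subst. rewrite (psum_ext _ (fun _ => 0)), psum_const; [ring|].
    intros i Hi. destruct Nat.eq_dec; auto; lia.
  - rewrite IHn by lia. ring.
Qed.

Lemma psum_telescope g n : psum (fun i => g (S i) - g i) n = g n - g 0%nat.
Proof. induction n; simpl; [ring | rewrite IHn; ring]. Qed.

Lemma sum_n_psum f n : sum_n f n = psum f (S n).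
Proof.
  induction n; simpl.
  - rewrite (@sum_O R_AbelianMonoid). simpl. lra.
  - rewrite (@sum_Sn R_AbelianMonoid), IHn. reflexivity.
Qed.

Lemma is_series_psum (f : nat -> R) (s : R) : is_series f s <-> is_lim_seq (psum f) s.
Proof.
  change (is_series f s) with (is_lim_seq (sum_n f) s).
  rewrite (is_lim_seq_incr_1 (psum f)).
  split; apply is_lim_seq_ext; intros; rewrite sum_n_psum; reflexivity.
Qed.

Lemma continuous_psum (F : nat -> R -> R) n x : (forall j, continuous (F j) x) ->
  continuous (fun x => psum (fun j => F j x) n) x.
Proof.
  intros H; induction n; simpl; [apply continuous_const|].
  apply (continuous_plus (fun x => psum (fun j => F j x) n) (F n)); auto.
Qed.

Lemma ex_RInt_cont (f : R -> R) a b : (forall x, continuous f x) -> ex_RInt f a b.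
Proof. intros; apply (@ex_RInt_continuous R_CompleteNormedModule); auto. Qed.

Lemma RInt_plusR (f g : R -> R) a b : ex_RInt f a b -> ex_RInt g a b ->
  RInt (fun x => f x + g x) a b = RInt f a b + RInt g a b.
Proof. intros; apply (RInt_plus f g); auto. Qed.

Lemma RInt_scalR (f : R -> R) a b c : ex_RInt f a b ->
  RInt (fun x => c * f x) a b = c * RInt f a b.
Proof. intros; apply (RInt_scal f a b c); auto. Qed.

Lemma RInt_constR a b c : RInt (fun _ => c) a b = (b - a) * c.
Proof. rewrite RInt_const. reflexivity. Qed.

Lemma RInt_ChaslesR (f : R -> R) a b c : (forall x, continuous f x) ->
  RInt f a b + RInt f b c = RInt f a c.
Proof. intros H. apply (RInt_Chasles f a b c); apply ex_RInt_cont; auto. Qed.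

Lemma RInt_psum (F : nat -> R -> R) a b n : (forall j x, continuous (F j) x) ->
  RInt (fun x => psum (fun j => F j x) n) a b = psum (fun j => RInt (F j) a b) n.
Proof.
  intros H; induction n; simpl.
  - rewrite RInt_constR. ring.
  - rewrite RInt_plusR, IHn; auto.
    + apply ex_RInt_cont; intros; apply continuous_psum; auto.
    + apply ex_RInt_cont; auto.
Qed.

Lemma Defs_RInt_continuous (f : R -> R) a b : (forall x, continuous f x) ->
  Defs.RInt f a b = RInt f a b.
Proof.
  intros Hc.
  pose proof (ex_RInt_Reals_0 _ _ _ (ex_RInt_cont f a b Hc)) as pr.
  assert (E : RInt f a b = RiemannInt pr).
  { apply is_RInt_unique. apply ex_RInt_Reals_aux_1. }
  unfold Defs.RInt.
  destruct (epsilon_spec (inhabits 0) (fun v => Defs.is_RInt f a b v)) as [pr' H].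
  { exists (RiemannInt pr). exists pr. reflexivity. }
  rewrite <- H, E. apply RiemannInt_P5.
Qed.

Lemma continuous_cos_lin c x : continuous (fun x => cos (c * x)) x.
Proof. apply (@ex_derive_continuous R_AbsRing R_NormedModule). auto_derive. auto. Qed.

Lemma continuous_sin_lin c x : continuous (fun x => sin (c * x)) x.
Proof. apply (@ex_derive_continuous R_AbsRing R_NormedModule). auto_derive. auto. Qed.

Lemma continuous_cos_mul e x : continuous (fun x => cos (x * e)) x.
Proof. apply (@ex_derive_continuous R_AbsRing R_NormedModule). auto_derive. auto. Qed.

Lemma continuous_sin_mul e x : continuous (fun x => sin (x * e)) x.
Proof. apply (@ex_derive_continuous R_AbsRing R_NormedModule). auto_derive. auto. Qed.

Lemma continuous_mul_cos (f : R -> R) e x : continuous f x ->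
  continuous (fun x => f x * cos (x * e)) x.
Proof.
  intros Hf. apply (continuous_mult f (fun x => cos (x * e))); auto.
  apply continuous_cos_mul.
Qed.

Lemma continuous_mul_sin (f : R -> R) e x : continuous f x ->
  continuous (fun x => f x * sin (x * e)) x.
Proof.
  intros Hf. apply (continuous_mult f (fun x => sin (x * e))); auto.
  apply continuous_sin_mul.
Qed.

Lemma smooth_continuous (f : R -> R) : smooth f -> forall x, continuous f x.
Proof.
  intros [D [HD0 HD]] x. apply (continuous_ext (D 0%nat)); auto.
  apply continuity_pt_filterlim, derivable_continuous_pt. exists (D 1%nat x). apply HD.
Qed.

Lemma continuous_bounded_supp (f : R -> R) a : 0 <= a -> (forall x, continuous f x) ->
  (forall x, a < Rabs x -> f x = 0) -> exists M, 0 <= M /\ forall x, Rabs (f x) <= M.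
Proof.
  intros Ha Hc Hz.
  destruct (continuity_ab_maj (fun x => Rabs (f x)) (- a) a) as [m [Hm _]].
  { lra. }
  { intros c _. apply continuity_pt_comp with (f1 := f) (f2 := Rabs).
    - apply continuity_pt_filterlim; apply Hc.
    - apply Rcontinuity_abs. }
  exists (Rabs (f m)). split; [apply Rabs_pos|]. intros x.
  destruct (Rle_dec (Rabs x) a).
  - apply Hm. apply Rabs_le_between; auto.
  - rewrite Hz by lra. rewrite Rabs_R0; apply Rabs_pos.
Qed.

(** * Decay of the Fourier transform of a smooth bump *)

Definition weight (n : nat) (y : R) : R := / (1 + Rabs y) ^ n.

Lemma weight_pos n y : 0 < weight n y.
Proof. unfold weight. apply Rinv_0_lt_compat, pow_lt. pose proof (Rabs_pos y); lra. Qed.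

Lemma weight_opp n y : weight n (- y) = weight n y.
Proof. unfold weight. rewrite Rabs_Ropp. reflexivity. Qed.

Lemma weight_le m n y : (m <= n)%nat -> weight n y <= weight m y.
Proof.
  intros Hmn. unfold weight. pose proof (Rabs_pos y).
  apply Rinv_le_contravar; [apply pow_lt; lra|]. apply Rle_pow; lra || lia.
Qed.

Lemma pow_1plus_le t n : 0 <= t -> (1 + t) ^ n <= 2 ^ n * (1 + t ^ n).
Proof.
  intros Ht. destruct (Rle_dec t 1).
  - apply Rle_trans with (2 ^ n); [apply pow_incr; lra|].
    pose proof (pow_le t n Ht). pose proof (pow_le 2 n ltac:(lra)). nra.
  - apply Rle_trans with ((2 * t) ^ n); [apply pow_incr; lra|].
    rewrite Rpow_mult_distr. pose proof (pow_le 2 n ltac:(lra)). nra.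
Qed.

Section FourierDecay.

Variables (D : nat -> R -> R) (a L : R).
Hypothesis HD : forall n x, derivable_pt_lim (D n) x (D (S n) x).
Hypothesis Ha : 0 <= a.
Hypothesis HaL : a < L.
Hypothesis Hsupp : forall x, a < Rabs x -> D 0%nat x = 0.

Lemma continuous_D n x : continuous (D n) x.
Proof.
  apply continuity_pt_filterlim. apply derivable_continuous_pt.
  exists (D (S n) x). apply HD.
Qed.

Lemma D_supp n x : a < Rabs x -> D n x = 0.
Proof.
  revert x; induction n as [|n IH]; intros x Hx; [now apply Hsupp|].
  apply (uniqueness_limite (D n) x); [apply HD|].
  intros eps Heps.
  assert (Hd : 0 < Rabs x - a) by lra.
  exists (mkposreal _ Hd). simpl. intros h Hh Hh2.
  rewrite (IH x Hx), IH.
  - replace ((0 - 0) / h - 0) with 0 by (field; auto). rewrite Rabs_R0; lra.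
  - pose proof (Rabs_triang_inv x (- h)) as Htri. rewrite Rabs_Ropp in Htri.
    replace (x - - h) with (x + h) in Htri by ring. lra.
Qed.

Definition FTc n e := RInt (fun x => D n x * cos (x * e)) (- L) L.
Definition FTs n e := RInt (fun x => D n x * sin (x * e)) (- L) L.

Lemma is_RInt_derivative_D (g dg : R -> R) m :
  (forall x, is_derive g x (dg x)) -> (forall x, continuous dg x) ->
  is_RInt (fun x => D (S m) x * g x + D m x * dg x) (- L) L 0.
Proof.
  intros Hg Hdg.
  assert (HL : D m L = 0 /\ D m (- L) = 0).
  { split; apply D_supp; [rewrite Rabs_right | rewrite Rabs_Ropp, Rabs_right]; lra. }
  replace 0 with (minus (D m L * g L) (D m (- L) * g (- L)))
    by (destruct HL as [-> ->]; unfold minus, plus, opp; simpl; ring).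
  apply (@is_RInt_derive R_CompleteNormedModule (fun x => D m x * g x)).
  - intros x _.
    evar (l : R). replace (D (S m) x * g x + D m x * dg x) with l.
    + apply (is_derive_mult (D m) g); auto.
      * apply is_derive_Reals, HD.
      * intros; apply Rmult_comm.
    + unfold l, plus, mult; simpl. ring.
  - intros x _.
    apply (continuous_plus (fun x => D (S m) x * g x) (fun x => D m x * dg x)).
    + apply (continuous_mult (D (S m)) g); [apply continuous_D|].
      apply (@ex_derive_continuous R_AbsRing R_NormedModule). eexists; apply Hg.
    + apply (continuous_mult (D m) dg); auto. apply continuous_D.
Qed.

Lemma FT_ibp (g dg : R -> R) m :
  (forall x, is_derive g x (dg x)) -> (forall x, continuous dg x) ->
  RInt (fun x => D m x * dg x) (- L) L = - RInt (fun x => D (S m) x * g x) (- L) L.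
Proof.
  intros Hg Hdg.
  pose proof (is_RInt_derivative_D g dg m Hg Hdg) as H.
  apply (@is_RInt_unique R_CompleteNormedModule) in H.
  assert (Hcg : forall x, continuous g x).
  { intros x. apply (@ex_derive_continuous R_AbsRing R_NormedModule). eexists; apply Hg. }
  rewrite RInt_plusR in H.
  - simpl in H. lra.
  - apply ex_RInt_cont; intros; apply (continuous_mult (D (S m)) g); auto; apply continuous_D.
  - apply ex_RInt_cont; intros; apply (continuous_mult (D m) dg); auto; apply continuous_D.
Qed.

Lemma FTc_ibp m e : e * FTc m e = - FTs (S m) e.
Proof.
  assert (H := FT_ibp (fun x => sin (x * e)) (fun x => e * cos (x * e)) m).
  rewrite (RInt_ext _ (fun x => e * (D m x * cos (x * e)))), RInt_scalR in H.
  - apply H.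
    + intros; auto_derive; [auto | ring].
    + intros. apply (continuous_scal_r e (fun x => cos (x * e))), continuous_cos_mul.
  - apply ex_RInt_cont; intros; apply continuous_mul_cos, continuous_D.
  - intros; simpl; ring.
Qed.

Lemma FTs_ibp m e : e * FTs m e = FTc (S m) e.
Proof.
  assert (H := FT_ibp (fun x => cos (x * e)) (fun x => - e * sin (x * e)) m).
  rewrite (RInt_ext _ (fun x => - e * (D m x * sin (x * e)))), RInt_scalR in H.
  - unfold FTc, FTs. rewrite <- Ropp_involutive, <- H; [ring| |].
    + intros; auto_derive; [auto | ring].
    + intros. apply (continuous_scal_r (- e) (fun x => sin (x * e))), continuous_sin_mul.
  - apply ex_RInt_cont; intros; apply continuous_mul_sin, continuous_D.
  - intros; simpl; ring.
Qed.

Lemma FT_bounded m : exists C, forall e, Rabs (FTc m e) <= C /\ Rabs (FTs m e) <= C.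
Proof.
  destruct (continuous_bounded_supp (D m) a Ha (continuous_D m) (D_supp m))
    as [M [HM0 HM]].
  exists ((L - - L) * M). intros e.
  assert (Htrig : forall t u, Rabs u <= 1 -> Rabs (D m t * u) <= M).
  { intros t u Hu. rewrite Rabs_mult.
    pose proof (Rabs_pos (D m t)). pose proof (Rabs_pos u). pose proof (HM t). nra. }
  split; apply abs_RInt_le_const; try lra.
  - apply ex_RInt_cont; intros; apply continuous_mul_cos, continuous_D.
  - intros t _. apply Htrig. apply Rabs_le, COS_bound.
  - apply ex_RInt_cont; intros; apply continuous_mul_sin, continuous_D.
  - intros t _. apply Htrig. apply Rabs_le, SIN_bound.
Qed.

Lemma FT_pow_bounded n : forall m, exists C, forall e,
  Rabs e ^ n * Rabs (FTc m e) <= C /\ Rabs e ^ n * Rabs (FTs m e) <= C.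
Proof.
  induction n as [|n IH]; intros m.
  - destruct (FT_bounded m) as [C HC]. exists C. intros e. simpl. rewrite !Rmult_1_l. auto.
  - destruct (IH (S m)) as [C HC]. exists C. intros e. simpl.
    replace (Rabs e * Rabs e ^ n * Rabs (FTc m e)) with (Rabs e ^ n * Rabs (e * FTc m e))
      by (rewrite Rabs_mult; ring).
    replace (Rabs e * Rabs e ^ n * Rabs (FTs m e)) with (Rabs e ^ n * Rabs (e * FTs m e))
      by (rewrite Rabs_mult; ring).
    rewrite FTc_ibp, FTs_ibp, Rabs_Ropp. apply and_comm, HC.
Qed.

Lemma FT_decay n : exists K, forall e,
  Rabs (FTc 0 e) <= K * weight n e /\ Rabs (FTs 0 e) <= K * weight n e.
Proof.
  destruct (FT_pow_bounded 0 0) as [C0 H0]. destruct (FT_pow_bounded n 0) as [Cn Hn].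
  exists (2 ^ n * (C0 + Cn)). intros e. pose proof (Rabs_pos e) as Hp.
  assert (Hpos : 0 < (1 + Rabs e) ^ n) by (apply pow_lt; lra).
  pose proof (pow_1plus_le (Rabs e) n Hp) as Hpw.
  pose proof (pow_le 2 n ltac:(lra)). pose proof (pow_le (Rabs e) n Hp).
  destruct (H0 e) as [A0 B0]. destruct (Hn e) as [An Bn]. simpl in A0, B0.
  rewrite Rmult_1_l in A0, B0. unfold weight.
  assert (Hdiv : forall u, 0 <= u -> u <= C0 -> Rabs e ^ n * u <= Cn ->
                   u <= 2 ^ n * (C0 + Cn) * / (1 + Rabs e) ^ n).
  { intros u Hu Hu0 Hun. apply (Rmult_le_reg_r ((1 + Rabs e) ^ n)); auto.
    rewrite Rmult_assoc, Rinv_l, Rmult_1_r by lra. nra. }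
  split; apply Hdiv; auto; apply Rabs_pos.
Qed.
End FourierDecay.

Lemma FT_smooth_decay (h : R -> R) a L n : smooth h -> 0 <= a < L ->
  (forall x, a < Rabs x -> h x = 0) ->
  exists K, forall e, Rabs (FT_re h L e) <= K * weight n e /\
                      Rabs (FT_im h L e) <= K * weight n e.
Proof.
  intros [D [HD0 HD]] [Ha HaL] Hsupp.
  assert (HDsupp : forall x, a < Rabs x -> D 0%nat x = 0) by (intros; rewrite HD0; auto).
  assert (Hh : forall x, continuous h x) by (apply smooth_continuous; exists D; auto).
  destruct (FT_decay D a L HD Ha HaL HDsupp n) as [K HK].
  assert (HPI : 0 < / (2 * PI)) by (apply Rinv_0_lt_compat; pose proof PI_RGT_0; lra).
  exists (/ (2 * PI) * K). intros e. destruct (HK e) as [Hc Hs].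
  unfold FT_re, FT_im, FTc, FTs in *.
  rewrite !Defs_RInt_continuous
    by (intros; apply continuous_mul_cos || apply continuous_mul_sin; auto).
  rewrite Rabs_Ropp, !Rabs_mult, Rabs_right by lra.
  rewrite !(RInt_ext (fun x => h x * _ (x * e)) (fun x => D 0%nat x * _ (x * e)))
    by (intros; rewrite HD0; auto).
  split; rewrite Rmult_assoc; apply Rmult_le_compat_l; lra.
Qed.

(** * The Fejer kernel *)

Definition exp_sum_re n x := psum (fun j => cos (INR j * x)) n.
Definition exp_sum_im n x := psum (fun j => sin (INR j * x)) n.

(* [|sum_(j<n) e^(ijx)|^2], i.e. [n] times the Fejer kernel of order [n]. *)
Definition fejer n x := exp_sum_re n x ^ 2 + exp_sum_im n x ^ 2.

Lemma fejer_ge0 n x : 0 <= fejer n x.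
Proof.
  unfold fejer. pose proof (pow2_ge_0 (exp_sum_re n x)). pose proof (pow2_ge_0 (exp_sum_im n x)).
  lra.
Qed.

Lemma continuous_fejer n x : continuous (fejer n) x.
Proof.
  assert (Cre : continuous (exp_sum_re n) x)
    by (apply (continuous_psum (fun j x => cos (INR j * x))); intros; apply continuous_cos_lin).
  assert (Cim : continuous (exp_sum_im n) x)
    by (apply (continuous_psum (fun j x => sin (INR j * x))); intros; apply continuous_sin_lin).
  assert (Csq : forall y, continuous (fun y : R => y ^ 2) y).
  { intros y. apply (@ex_derive_continuous R_AbsRing R_NormedModule). auto_derive. auto. }
  apply (continuous_plus (fun x => exp_sum_re n x ^ 2) (fun x => exp_sum_im n x ^ 2));
    apply (continuous_comp _ (fun y => y ^ 2)); auto.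
Qed.

Lemma exp_sum_re_sin_half n x :
  2 * sin (x / 2) * exp_sum_re n x = sin ((INR n - 1/2) * x) + sin (x / 2).
Proof.
  unfold exp_sum_re. induction n; simpl psum.
  - simpl. replace ((0 - 1/2) * x) with (- (x / 2)) by field. rewrite sin_neg. ring.
  - rewrite Rmult_plus_distr_l, IHn, S_INR.
    replace ((INR n - 1/2) * x) with (INR n * x - x / 2) by field.
    replace ((INR n + 1 - 1/2) * x) with (INR n * x + x / 2) by field.
    rewrite sin_minus, sin_plus. ring.
Qed.

Lemma exp_sum_im_sin_half n x :
  2 * sin (x / 2) * exp_sum_im n x = cos (x / 2) - cos ((INR n - 1/2) * x).
Proof.
  unfold exp_sum_im. induction n; simpl psum.
  - simpl. replace ((0 - 1/2) * x) with (- (x / 2)) by field. rewrite cos_neg. ring.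
  - rewrite Rmult_plus_distr_l, IHn, S_INR.
    replace ((INR n - 1/2) * x) with (INR n * x - x / 2) by field.
    replace ((INR n + 1 - 1/2) * x) with (INR n * x + x / 2) by field.
    rewrite cos_minus, cos_plus. ring.
Qed.

Lemma sin_half_sq x : sin (x / 2) ^ 2 = (1 - cos x) / 2.
Proof. replace x with (2 * (x / 2)) at 2 by field. rewrite cos_2a_sin. simpl; field. Qed.

(* [(1 - cos x) * fejer n x = |e^(inx) - 1|^2 / 2]. *)
Lemma fejer_cos_le n x : (1 - cos x) * fejer n x <= 2.
Proof.
  assert (E : 4 * (sin (x / 2) ^ 2 * fejer n x) =
    (2 * sin (x / 2) * exp_sum_re n x) ^ 2 + (2 * sin (x / 2) * exp_sum_im n x) ^ 2)
    by (unfold fejer; ring).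
  rewrite exp_sum_re_sin_half, exp_sum_im_sin_half, sin_half_sq in E.
  set (A := (INR n - 1/2) * x) in E. set (b := x / 2) in E.
  pose proof (sin2_cos2 A). pose proof (sin2_cos2 b). unfold Rsqr in *.
  pose proof (COS_bound (A + b)). rewrite cos_plus in *.
  nra.
Qed.

Lemma fejer_expand n x :
  fejer n x = psum (fun j => psum (fun l => cos ((INR j - INR l) * x)) n) n.
Proof.
  unfold fejer, exp_sum_re, exp_sum_im. simpl. rewrite !Rmult_1_r, !psum_mul, <- psum_plus.
  apply psum_ext; intros j _. rewrite <- psum_plus. apply psum_ext; intros l _.
  replace ((INR j - INR l) * x) with (INR j * x - INR l * x) by ring.
  rewrite cos_minus. ring.
Qed.

Lemma RInt_cos_nat_diff (j l : nat) :
  RInt (fun x => cos ((INR j - INR l) * x)) (- PI) PI =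
  if Nat.eq_dec j l then 2 * PI else 0.
Proof.
  destruct (Nat.eq_dec j l) as [<-|Hjl].
  - rewrite (RInt_ext _ (fun _ => 1)).
    + rewrite RInt_constR. simpl. ring.
    + intros. rewrite Rminus_diag, Rmult_0_l, cos_0. reflexivity.
  - set (m := INR j - INR l).
    assert (Hm : m <> 0) by (unfold m; intros H; apply Hjl, INR_eq; lra).
    assert (Hk : m = IZR (Z.of_nat j - Z.of_nat l))
      by (unfold m; rewrite minus_IZR, <- !INR_IZR_INZ; reflexivity).
    apply (@is_RInt_unique R_CompleteNormedModule).
    replace 0 with (minus (sin (m * PI) / m) (sin (m * - PI) / m)).
    + apply (@is_RInt_derive R_CompleteNormedModule (fun x => sin (m * x) / m)).
      * intros; auto_derive; [auto | field; auto].
      * intros; apply continuous_cos_lin.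
    + rewrite !sin_eq_0_1; [unfold minus, plus, opp; simpl; field; auto | |].
      * exists (- (Z.of_nat j - Z.of_nat l))%Z. rewrite opp_IZR, <- Hk. ring.
      * exists (Z.of_nat j - Z.of_nat l)%Z. rewrite <- Hk. ring.
Qed.

Lemma RInt_fejer n : RInt (fejer n) (- PI) PI = INR n * (2 * PI).
Proof.
  rewrite (RInt_ext _ (fun x => psum (fun j => psum (fun l => cos ((INR j - INR l) * x)) n) n))
    by (intros; apply fejer_expand).
  rewrite (RInt_psum (fun j x => psum (fun l => cos ((INR j - INR l) * x)) n)).
  - rewrite (psum_ext _ (fun j => 2 * PI)); [apply psum_const|].
    intros j Hj.
    rewrite (RInt_psum (fun l x => cos ((INR j - INR l) * x)))
      by (intros; apply continuous_cos_lin).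
    rewrite (psum_ext _ (fun l => if Nat.eq_dec j l then 2 * PI else 0))
      by (intros; apply RInt_cos_nat_diff).
    apply psum_delta; auto.
  - intros j x. apply (continuous_psum (fun l x => cos ((INR j - INR l) * x))).
    intros; apply continuous_cos_lin.
Qed.

Lemma cos_Rabs x : cos (Rabs x) = cos x.
Proof. unfold Rabs; destruct Rcase_abs; [apply cos_neg | auto]. Qed.

Lemma fejer_le_far n x : PI <= Rabs x <= 3 * PI / 2 -> fejer n x <= 2.
Proof.
  intros Hx. pose proof PI_RGT_0.
  assert (cos x <= 0) by (rewrite <- cos_Rabs; apply cos_le_0; lra).
  pose proof (fejer_cos_le n x). pose proof (fejer_ge0 n x). nra.
Qed.

Lemma fejer_le_away n d x : 0 < d -> d <= Rabs x <= PI -> fejer n x <= 2 / (1 - cos d).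
Proof.
  intros Hd Hx.
  assert (Hcd : cos d < 1)
    by (rewrite <- cos_0; apply cos_decreasing_1; pose proof PI_RGT_0; lra).
  assert (Hcx : cos x <= cos d).
  { rewrite <- cos_Rabs. destruct (Req_dec (Rabs x) d) as [<-|Hne]; [lra|].
    left. apply cos_decreasing_1; pose proof (Rabs_pos x); lra. }
  pose proof (fejer_cos_le n x). pose proof (fejer_ge0 n x).
  apply (Rmult_le_reg_l (1 - cos d)); [lra|].
  unfold Rdiv. rewrite <- Rmult_assoc, Rinv_r_simpl_m by lra. nra.
Qed.

Lemma RInt_fejer_concentrate (psi : R -> R) B e d n :
  (forall x, continuous psi x) -> 0 < d -> d <= PI -> 0 <= e ->
  (forall x, Rabs (psi x) <= B) -> (forall x, Rabs x < d -> Rabs (psi x) <= e) ->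
  Rabs (RInt (fun x => psi x * fejer n x) (- PI) PI)
    <= e * (INR n * (2 * PI)) + 2 * PI * (B * (2 / (1 - cos d))).
Proof.
  intros Hc Hd HdP He HB Hnear. pose proof PI_RGT_0.
  assert (Hcd : cos d < 1)
    by (rewrite <- cos_0; apply cos_decreasing_1; lra).
  set (c := 2 / (1 - cos d)).
  assert (Hc0 : 0 < c) by (apply Rdiv_lt_0_compat; lra).
  assert (Hcont : forall x, continuous (fun x => psi x * fejer n x) x)
    by (intros; apply (continuous_mult psi (fejer n)); auto; apply continuous_fejer).
  assert (Hgc : forall x, continuous (fun x => e * fejer n x + B * c) x).
  { intros x. apply (continuous_plus (fun x => e * fejer n x) (fun _ => B * c)).
    - apply (continuous_scal_r e (fejer n)), continuous_fejer.
    - apply continuous_const. }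
  apply Rle_trans with (RInt (fun x => Rabs (psi x * fejer n x)) (- PI) PI).
  { apply abs_RInt_le; [lra|]. apply ex_RInt_cont; auto. }
  apply Rle_trans with (RInt (fun x => e * fejer n x + B * c) (- PI) PI).
  - apply RInt_le; [lra | | apply ex_RInt_cont; auto |].
    + apply ex_RInt_cont. intros x.
      apply (continuous_comp (fun x => psi x * fejer n x) Rabs); auto. apply continuous_Rabs.
    + intros x Hx. pose proof (fejer_ge0 n x). pose proof (HB x).
      rewrite Rabs_mult, (Rabs_right (fejer n x)) by lra.
      destruct (Rlt_dec (Rabs x) d).
      * pose proof (Hnear x r). pose proof (Rabs_pos (psi x)). nra.
      * assert (fejer n x <= c).
        { apply fejer_le_away; auto. split; [lra|]. apply Rabs_le; lra. }
        pose proof (Rabs_pos (psi x)). nra.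
  - rewrite RInt_plusR, RInt_scalR, RInt_fejer, RInt_constR.
    + right. simpl. ring.
    + apply ex_RInt_cont, continuous_fejer.
    + apply ex_RInt_cont; intros. apply (continuous_scal_r e (fejer n)), continuous_fejer.
    + apply ex_RInt_cont; intros; apply continuous_const.
Qed.

Lemma RInt_fejer_outer (phi : R -> R) M n :
  (forall x, continuous phi x) -> (forall x, 3 * PI / 2 < Rabs x -> phi x = 0) ->
  (forall x, Rabs (phi x) <= M) ->
  Rabs (RInt (fun x => phi x * fejer n x) (- (2 * PI)) (- PI))
  + Rabs (RInt (fun x => phi x * fejer n x) PI (2 * PI)) <= 4 * PI * M.
Proof.
  intros Hc Hz HM. pose proof PI_RGT_0.
  set (K := fun x => phi x * fejer n x).
  assert (HK : forall x, continuous K x)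
    by (intros; apply (continuous_mult phi (fejer n)); auto; apply continuous_fejer).
  assert (Hfar : forall x, PI <= Rabs x -> Rabs (K x) <= 2 * M).
  { intros x Hx. unfold K. destruct (Rlt_dec (3 * PI / 2) (Rabs x)).
    - rewrite Hz, Rmult_0_l, Rabs_R0 by auto. pose proof (HM x); pose proof (Rabs_pos (phi x)). lra.
    - pose proof (fejer_le_far n x ltac:(lra)). pose proof (fejer_ge0 n x).
      rewrite Rabs_mult, (Rabs_right (fejer n x)) by lra.
      pose proof (HM x). pose proof (Rabs_pos (phi x)). nra. }
  assert (B1 : Rabs (RInt K (- (2 * PI)) (- PI)) <= (- PI - - (2 * PI)) * (2 * M)).
  { apply abs_RInt_le_const; [lra | apply ex_RInt_cont; auto |].
    intros x Hx. apply Hfar. rewrite Rabs_left; lra. }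
  assert (B2 : Rabs (RInt K PI (2 * PI)) <= (2 * PI - PI) * (2 * M)).
  { apply abs_RInt_le_const; [lra | apply ex_RInt_cont; auto |].
    intros x Hx. apply Hfar. rewrite Rabs_right; lra. }
  lra.
Qed.

Lemma fejer_approx_bound (phi : R -> R) M e d n :
  (forall x, continuous phi x) -> (forall x, 3 * PI / 2 < Rabs x -> phi x = 0) ->
  (forall x, Rabs (phi x) <= M) -> 0 < d -> d <= PI -> 0 <= e ->
  (forall x, Rabs x < d -> Rabs (phi x - phi 0) <= e) -> 0 < INR n ->
  Rabs (RInt (fun x => phi x * fejer n x) (- (2 * PI)) (2 * PI) / INR n - 2 * PI * phi 0)
    <= (4 * PI * M + 2 * PI * (2 * M * (2 / (1 - cos d)))) / INR n + 2 * PI * e.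
Proof.
  intros Hc Hz HM Hd HdP He Hnear Hn. pose proof PI_RGT_0.
  set (K := fun x => phi x * fejer n x).
  assert (HK : forall x, continuous K x)
    by (intros; apply (continuous_mult phi (fejer n)); auto; apply continuous_fejer).
  pose proof (RInt_fejer_outer phi M n Hc Hz HM) as Bout. fold K in Bout.
  assert (Bin : Rabs (RInt K (- PI) PI - INR n * (2 * PI) * phi 0)
                 <= e * (INR n * (2 * PI)) + 2 * PI * (2 * M * (2 / (1 - cos d)))).
  { replace (RInt K (- PI) PI - INR n * (2 * PI) * phi 0)
      with (RInt (fun x => (phi x - phi 0) * fejer n x) (- PI) PI).
    - apply (RInt_fejer_concentrate _ (2 * M) e d n); auto.
      + intros x. apply (continuous_minus phi (fun _ => phi 0)); auto. apply continuous_const.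
      + intros x. pose proof (Rabs_triang (phi x) (- phi 0)) as Htri. rewrite Rabs_Ropp in Htri.
        pose proof (HM x). pose proof (HM 0). unfold Rminus. lra.
    - rewrite <- RInt_fejer, (RInt_ext _ (fun x => K x + (- phi 0) * fejer n x))
        by (intros; unfold K; simpl; ring).
      rewrite RInt_plusR, RInt_scalR; [simpl; ring | | apply ex_RInt_cont; auto |].
      + apply ex_RInt_cont, continuous_fejer.
      + apply ex_RInt_cont; intros.
        apply (continuous_scal_r (- phi 0) (fejer n)), continuous_fejer. }
  rewrite <- (RInt_ChaslesR K (- (2 * PI)) (- PI)), <- (RInt_ChaslesR K (- PI) PI (2 * PI))
    by auto.
  set (I1 := RInt K (- (2 * PI)) (- PI)). set (I2 := RInt K (- PI) PI).
  set (I3 := RInt K PI (2 * PI)). fold I1 I3 in Bout. fold I2 in Bin.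
  set (c := 2 / (1 - cos d)) in *.
  replace ((I1 + (I2 + I3)) / INR n - 2 * PI * phi 0)
    with ((I1 + I3 + (I2 - INR n * (2 * PI) * phi 0)) / INR n) by (field; lra).
  unfold Rdiv. rewrite Rabs_mult, (Rabs_right (/ INR n)) by (left; apply Rinv_0_lt_compat; lra).
  pose proof (Rabs_triang (I1 + I3) (I2 - INR n * (2 * PI) * phi 0)).
  pose proof (Rabs_triang I1 I3).
  apply Rle_trans with ((4 * PI * M + (e * (INR n * (2 * PI)) + 2 * PI * (2 * M * c))) * / INR n).
  - apply Rmult_le_compat_r; [left; apply Rinv_0_lt_compat|]; lra.
  - right. field. lra.
Qed.

Lemma fejer_approx_identity (phi : R -> R) :
  (forall x, continuous phi x) -> (forall x, 3 * PI / 2 < Rabs x -> phi x = 0) ->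
  is_lim_seq (fun N => RInt (fun x => phi x * fejer (S N) x) (- (2 * PI)) (2 * PI) / INR (S N))
    (2 * PI * phi 0).
Proof.
  intros Hc Hz. pose proof PI_RGT_0 as Hpi.
  apply is_lim_seq_Reals. intros eps Heps.
  destruct (continuous_bounded_supp phi (3 * PI / 2) ltac:(lra) Hc Hz) as [M [HM0 HM]].
  set (e := eps / (4 * PI)).
  assert (He : 0 < e) by (unfold e; apply Rdiv_lt_0_compat; lra).
  destruct (proj2 (continuity_pt_filterlim phi 0) (Hc 0) e He) as [del [Hdel Hd]].
  set (d := Rmin del PI).
  assert (Hnear : forall x, Rabs x < d -> Rabs (phi x - phi 0) <= e).
  { intros x Hx. destruct (Req_dec x 0) as [->|Hx0]; [rewrite Rminus_diag, Rabs_R0; lra|].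
    left. apply (Hd x). split; [split; [exact I | congruence]|].
    simpl. unfold R_dist. rewrite Rminus_0_r.
    pose proof (Rmin_l del PI) as Hdl. fold d in Hdl. lra. }
  assert (Hd0 : 0 < d) by (unfold d; apply Rmin_glb_lt; lra).
  assert (HdP : d <= PI) by apply Rmin_r.
  assert (Hcd : cos d < 1) by (rewrite <- cos_0; apply cos_decreasing_1; lra).
  assert (Hc0 : 0 <= 2 / (1 - cos d)) by (apply Rdiv_le_0_compat; lra).
  set (C := 4 * PI * M + 2 * PI * (2 * M * (2 / (1 - cos d)))).
  assert (HC : 0 <= C) by (unfold C; assert (0 <= M * (2 / (1 - cos d))) by nra; nra).
  destruct (INR_unbounded (2 * C / eps)) as [N0 HN0].
  exists N0. intros N HN. unfold R_dist.
  assert (Hn : 2 * C / eps < INR (S N))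
    by (apply Rlt_le_trans with (INR N0); auto; apply le_INR; lia).
  assert (Hnpos : 0 < INR (S N)) by (apply lt_0_INR; lia).
  eapply Rle_lt_trans; [apply (fejer_approx_bound phi M e d); auto; lra|]. fold C.
  replace (2 * PI * e) with (eps / 2) by (unfold e; field; lra).
  enough (C / INR (S N) < eps / 2) by lra.
  apply (Rmult_lt_reg_r (INR (S N))); auto. unfold Rdiv. rewrite Rmult_assoc, Rinv_l by lra.
  apply (Rmult_lt_compat_r (eps / 2)) in Hn; [|lra].
  replace (2 * C / eps * (eps / 2)) with C in Hn by (field; lra). lra.
Qed.

(** * Sums over Z and Fejer summation *)

Definition is_zsum (a : Z -> R) (s : R) := exists s1 s2,
  is_series (fun n => a (Z.of_nat n)) s1 /\ is_series (fun n => a (- Z.of_nat (S n))%Z) s2 /\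
  s = s1 + s2.

Lemma is_zsum_unique a s : is_zsum a s -> zsum a = s.
Proof.
  intros [s1 [s2 [H1 [H2 ->]]]]. unfold zsum.
  pose proof (epsilon_spec (inhabits 0) (fun v => infinite_sum (fun n => a (Z.of_nat n)) v)
     (ex_intro _ s1 (proj1 (is_series_Reals _ _) H1))) as E1.
  pose proof (epsilon_spec (inhabits 0) (fun v => infinite_sum (fun n => a (- Z.of_nat (S n))%Z) v)
     (ex_intro _ s2 (proj1 (is_series_Reals _ _) H2))) as E2.
  apply is_series_Reals, is_series_unique in E1, E2. apply is_series_unique in H1, H2.
  rewrite <- E1, <- E2, H1, H2. reflexivity.
Qed.

Lemma is_zsum_ext f g s : (forall k, f k = g k) -> is_zsum f s -> is_zsum g s.
Proof.
  intros H [s1 [s2 [H1 [H2 ->]]]]. exists s1, s2.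
  split; [|split; auto]; eapply is_series_ext; eauto; intros; simpl; auto.
Qed.

Lemma is_zsum_plus a b sa sb : is_zsum a sa -> is_zsum b sb ->
  is_zsum (fun k => a k + b k) (sa + sb).
Proof.
  intros [a1 [a2 [A1 [A2 ->]]]] [b1 [b2 [B1 [B2 ->]]]].
  exists (a1 + b1), (a2 + b2). split; [|split; [|ring]].
  - apply (@is_series_plus R_AbsRing R_NormedModule (fun n => a (Z.of_nat n))); auto.
  - apply (@is_series_plus R_AbsRing R_NormedModule (fun n => a (- Z.of_nat (S n))%Z)); auto.
Qed.

Lemma is_zsum_scal c a sa : is_zsum a sa -> is_zsum (fun k => c * a k) (c * sa).
Proof.
  intros [a1 [a2 [A1 [A2 ->]]]].
  exists (c * a1), (c * a2). split; [|split; [|ring]].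
  - apply (@is_series_scal_l R_AbsRing R_NormedModule c (fun n => a (Z.of_nat n))); auto.
  - apply (@is_series_scal_l R_AbsRing R_NormedModule c (fun n => a (- Z.of_nat (S n))%Z)); auto.
Qed.

Lemma is_series_dominated (a b : nat -> R) sb : (forall n, Rabs (a n) <= b n) -> is_series b sb ->
  exists sa, is_series a sa /\ Rabs sa <= sb.
Proof.
  intros Hd Hb.
  assert (Ea : ex_series (fun n => Rabs (a n))).
  { apply (@ex_series_le R_AbsRing R_CompleteNormedModule _ b); [|exists sb; auto].
    intros n. change (norm (Rabs (a n))) with (Rabs (Rabs (a n))). rewrite Rabs_Rabsolu; auto. }
  destruct (ex_series_Rabs a Ea) as [sa Ha]. exists sa. split; auto.
  rewrite <- (is_series_unique _ _ Ha), <- (is_series_unique _ _ Hb).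
  apply Rle_trans with (Series (fun n => Rabs (a n))); [apply Series_Rabs; auto|].
  apply Series_le; [|exists sb; auto]. intros n; split; [apply Rabs_pos | auto].
Qed.

Lemma is_zsum_dominated a b sb : (forall k, Rabs (a k) <= b k) -> is_zsum b sb ->
  exists sa, is_zsum a sa /\ Rabs sa <= sb.
Proof.
  intros Hd [b1 [b2 [B1 [B2 ->]]]].
  destruct (is_series_dominated (fun n => a (Z.of_nat n)) _ _ (fun n => Hd _) B1) as [a1 [A1 L1]].
  destruct (is_series_dominated (fun n => a (- Z.of_nat (S n))%Z) _ _ (fun n => Hd _) B2)
    as [a2 [A2 L2]].
  exists (a1 + a2). split; [exists a1, a2; auto|].
  pose proof (Rabs_triang a1 a2). lra.
Qed.

Lemma is_series_bounded (f : nat -> R) B : (forall n, 0 <= f n) -> (forall N, psum f N <= B) ->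
  exists s, is_series f s /\ s <= B.
Proof.
  intros Hp HB.
  assert (Hinc : forall n, psum f n <= psum f (S n)) by (intros; simpl; specialize (Hp n); lra).
  destruct (ex_finite_lim_seq_incr _ B Hinc HB) as [l Hl].
  exists l. split; [apply is_series_psum; auto|].
  pose proof (is_lim_seq_le _ _ _ _ HB Hl (is_lim_seq_const B)). auto.
Qed.

Lemma weight2_atan y : weight 2 y <= 2 * (atan (y + 1) - atan y).
Proof.
  destruct (MVT_cor2 atan (fun x => / (1 + x ^ 2)) y (y + 1)) as [c [Hc Hc2]];
    [lra | intros; apply derivable_pt_lim_atan|].
  rewrite Hc. replace (y + 1 - y) with 1 by ring. unfold weight.
  assert (Hc3 : Rabs c <= Rabs y + 1) by (unfold Rabs; repeat destruct Rcase_abs; lra).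
  pose proof (Rabs_pos c). pose proof (Rabs_pos y).
  assert (Hsq : c ^ 2 = Rabs c ^ 2) by (rewrite pow2_abs; reflexivity).
  assert (1 + c ^ 2 <= 2 * (1 + Rabs y) ^ 2) by (rewrite Hsq; simpl; nra).
  assert (0 < 1 + c ^ 2) by (pose proof (pow2_ge_0 c); lra).
  replace (2 * (/ (1 + c ^ 2) * 1)) with (/ ((1 + c ^ 2) / 2)) by (field; lra).
  apply Rinv_le_contravar; lra.
Qed.

Lemma psum_weight2_le y N : psum (fun n => weight 2 (y + INR n)) N <= 2 * PI.
Proof.
  apply Rle_trans with (psum (fun n => 2 * (atan (y + INR (S n)) - atan (y + INR n))) N).
  - apply psum_le. intros n _. rewrite S_INR, <- Rplus_assoc. apply weight2_atan.
  - rewrite psum_scal, (psum_telescope (fun n => atan (y + INR n))).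
    pose proof (atan_bound (y + INR N)). pose proof (atan_bound (y + INR 0)). lra.
Qed.

Lemma is_zsum_weight2 xi : exists s, is_zsum (fun k => weight 2 (xi - IZR k)) s /\ s <= 4 * PI.
Proof.
  destruct (is_series_bounded (fun n => weight 2 (xi - IZR (Z.of_nat n))) (2 * PI))
    as [s1 [S1 L1]].
  { intros; left; apply weight_pos. }
  { intros N. rewrite (psum_ext _ (fun n => weight 2 (- xi + INR n))); [apply psum_weight2_le|].
    intros n _. rewrite <- INR_IZR_INZ, <- weight_opp. f_equal. ring. }
  destruct (is_series_bounded (fun n => weight 2 (xi - IZR (- Z.of_nat (S n)))) (2 * PI))
    as [s2 [S2 L2]].
  { intros; left; apply weight_pos. }
  { intros N. rewrite (psum_ext _ (fun n => weight 2 ((xi + 1) + INR n))); [apply psum_weight2_le|].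
    intros n _. rewrite opp_IZR, <- INR_IZR_INZ, S_INR. f_equal. ring. }
  exists (s1 + s2). split; [exists s1, s2; auto | lra].
Qed.

Lemma psum_cesaro (E : nat -> R) : (forall n, 0 <= E n) -> is_lim_seq E 0 ->
  forall eps, 0 < eps -> exists N0, forall n, (N0 <= n)%nat -> psum E n <= eps * INR n.
Proof.
  intros Hp HE eps Heps. apply (proj1 (is_lim_seq_Reals _ _)) in HE.
  destruct (HE (eps / 2) ltac:(lra)) as [N1 HN1].
  set (C1 := psum E N1).
  destruct (INR_unbounded (2 * C1 / eps)) as [N2 HN2].
  exists (max N1 N2). intros n Hn.
  replace n with (N1 + (n - N1))%nat by lia. rewrite psum_split.
  assert (Htail : psum (fun i => E (N1 + i)%nat) (n - N1) <= psum (fun _ => eps / 2) (n - N1)).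
  { apply psum_le. intros i _. specialize (HN1 (N1 + i)%nat ltac:(lia)). unfold R_dist in HN1.
    rewrite Rminus_0_r in HN1. pose proof (Rle_abs (E (N1 + i)%nat)). lra. }
  rewrite psum_const, minus_INR in Htail by lia. rewrite plus_INR, minus_INR by lia.
  assert (INR N2 <= INR n) by (apply le_INR; lia).
  assert (INR N1 <= INR n) by (apply le_INR; lia).
  assert (2 * C1 / eps * eps = 2 * C1) by (field; lra).
  assert (0 <= C1) by (apply psum_ge0; auto).
  fold C1. pose proof (pos_INR N1). nra.
Qed.

Lemma psum_diff_index (a : Z -> R) j N : (j <= N)%nat ->
  psum (fun l => a (Z.of_nat j - Z.of_nat l)%Z) (S N) =
  psum (fun n => a (Z.of_nat n)) (S j) + psum (fun n => a (- Z.of_nat (S n))%Z) (N - j).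
Proof.
  intros H. replace (S N) with (S j + (N - j))%nat by lia. rewrite psum_split. f_equal.
  - rewrite <- psum_rev. apply psum_ext. intros l Hl. f_equal. lia.
  - apply psum_ext. intros i _. f_equal. lia.
Qed.

Lemma is_lim_seq_psum_error (f : nat -> R) (s : R) :
  is_lim_seq (psum f) s -> is_lim_seq (fun n => Rabs (s - psum f n)) 0.
Proof.
  intros H. apply (proj1 (is_lim_seq_Reals _ _)) in H. apply is_lim_seq_Reals.
  intros eps He. destruct (H eps He) as [N HN]. exists N. intros n Hn.
  specialize (HN n Hn). unfold R_dist in *. rewrite Rminus_0_r, Rabs_Rabsolu, Rabs_minus_sym. auto.
Qed.

Lemma fejer_mean_error (a : Z -> R) s1 s2 N :
  let ap := fun n => a (Z.of_nat n) in let am := fun n => a (- Z.of_nat (S n))%Z in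
  Rabs (psum (fun j => psum (fun l => a (Z.of_nat j - Z.of_nat l)%Z) (S N)) (S N) / INR (S N)
        - (s1 + s2))
  <= (psum (fun n => Rabs (s1 - psum ap n)) (S (S N)) + psum (fun n => Rabs (s2 - psum am n)) (S N))
     / INR (S N).
Proof.
  intros ap am. set (n := S N).
  assert (Hn : 0 < INR n) by (apply lt_0_INR; unfold n; lia).
  set (E1 := fun n => Rabs (s1 - psum ap n)). set (E2 := fun n => Rabs (s2 - psum am n)).
  replace (psum (fun j => psum (fun l => a (Z.of_nat j - Z.of_nat l)%Z) n) n / INR n - (s1 + s2))
    with (psum (fun j => (psum ap (S j) - s1) + (psum am (N - j) - s2)) n / INR n).
  - unfold Rdiv. rewrite Rabs_mult, (Rabs_right (/ INR n)) by (left; apply Rinv_0_lt_compat; lra).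
    apply Rmult_le_compat_r; [left; apply Rinv_0_lt_compat; lra|].
    eapply Rle_trans; [apply Rabs_psum_le|].
    rewrite psumSl, <- (psum_rev E2), Rplus_assoc, <- psum_plus.
    assert (0 <= E1 0%nat) by apply Rabs_pos.
    enough (psum (fun i => Rabs (psum ap (S i) - s1 + (psum am (N - i) - s2))) n <=
            psum (fun i => E1 (S i) + E2 (n - 1 - i)%nat) n) by lra.
    apply psum_le. intros j Hj. unfold E1, E2.
    replace (n - 1 - j)%nat with (N - j)%nat by (unfold n; lia).
    rewrite (Rabs_minus_sym s1), (Rabs_minus_sym s2). apply Rabs_triang.
  - symmetry.
    rewrite (psum_ext (fun j => (psum ap (S j) - s1) + (psum am (N - j) - s2))
                       (fun j => (psum ap (S j) + psum am (N - j)) + (- (s1 + s2))))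
      by (intros; ring).
    rewrite psum_plus, psum_const.
    rewrite (psum_ext _ (fun j => psum ap (S j) + psum am (N - j))); [field; lra|].
    intros j Hj. apply psum_diff_index. unfold n in Hj. lia.
Qed.

Lemma fejer_means_is_zsum (a : Z -> R) (s : R) : is_zsum a s ->
  is_lim_seq (fun N => psum (fun j => psum (fun l => a (Z.of_nat j - Z.of_nat l)%Z) (S N)) (S N)
                       / INR (S N)) s.
Proof.
  intros [s1 [s2 [H1 [H2 ->]]]].
  set (ap := fun n => a (Z.of_nat n)) in *. set (am := fun n => a (- Z.of_nat (S n))%Z) in *.
  set (E1 := fun n => Rabs (s1 - psum ap n)). set (E2 := fun n => Rabs (s2 - psum am n)).
  assert (L1 : is_lim_seq E1 0) by (apply is_lim_seq_psum_error, is_series_psum; auto).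
  assert (L2 : is_lim_seq E2 0) by (apply is_lim_seq_psum_error, is_series_psum; auto).
  apply is_lim_seq_Reals. intros eps Heps.
  destruct (psum_cesaro E1 (fun _ => Rabs_pos _) L1 (eps / 4) ltac:(lra)) as [Na HNa].
  destruct (psum_cesaro E2 (fun _ => Rabs_pos _) L2 (eps / 4) ltac:(lra)) as [Nb HNb].
  exists (max Na Nb). intros N HN. unfold R_dist.
  eapply Rle_lt_trans; [apply fejer_mean_error|]. fold ap am E1 E2.
  assert (Hn : 1 <= INR (S N)) by (rewrite S_INR; pose proof (pos_INR N); lra).
  assert (A1 : psum E1 (S (S N)) <= eps / 4 * (INR (S N) + 1))
    by (rewrite <- S_INR; apply HNa; lia).
  assert (A2 : psum E2 (S N) <= eps / 4 * INR (S N)) by (apply HNb; lia).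
  apply (Rmult_lt_reg_r (INR (S N))); [lra|]. unfold Rdiv.
  rewrite Rmult_assoc, Rinv_l, Rmult_1_r by lra. nra.
Qed.

(** * Poisson summation *)

Lemma psum_psum_cos_diff y x n :
  psum (fun j => psum (fun l => cos (y - (INR j - INR l) * x)) n) n = cos y * fejer n x.
Proof.
  rewrite (psum_ext _ (fun j => psum (fun l =>
       cos y * (cos (INR j * x) * cos (INR l * x)) + cos y * (sin (INR j * x) * sin (INR l * x)) +
       (sin y * (sin (INR j * x) * cos (INR l * x))
        + - sin y * (cos (INR j * x) * sin (INR l * x)))) n)).
  2: { intros j _. apply psum_ext. intros l _.
       replace ((INR j - INR l) * x) with (INR j * x - INR l * x) by ring.
       rewrite cos_minus, sin_minus, cos_minus. ring. }
  rewrite (psum_ext _ (fun j => cos y * psum (fun l => cos (INR j * x) * cos (INR l * x)) n +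
      cos y * psum (fun l => sin (INR j * x) * sin (INR l * x)) n +
      (sin y * psum (fun l => sin (INR j * x) * cos (INR l * x)) n +
       - sin y * psum (fun l => cos (INR j * x) * sin (INR l * x)) n)))
    by (intros; rewrite !psum_plus, !psum_scal; ring).
  rewrite !psum_plus, !psum_scal, <- !psum_mul. unfold fejer, exp_sum_re, exp_sum_im. ring.
Qed.

Lemma psum_psum_sin_diff y x n :
  psum (fun j => psum (fun l => sin (y - (INR j - INR l) * x)) n) n = sin y * fejer n x.
Proof.
  assert (Hsin : forall u, sin u = cos (u - PI / 2))
    by (intros; rewrite <- cos_shift, <- cos_neg; f_equal; ring).
  rewrite Hsin, <- psum_psum_cos_diff.
  apply psum_ext; intros; apply psum_ext; intros. rewrite Hsin. f_equal. ring.
Qed.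

Section PoissonSummation.

Variable h : R -> R.
Hypothesis hc : forall x, continuous h x.
Hypothesis hsupp : forall x, 3 * PI / 2 < Rabs x -> h x = 0.

Lemma FT_re_RInt e :
  FT_re h (2 * PI) e = / (2 * PI) * RInt (fun x => h x * cos (x * e)) (- (2 * PI)) (2 * PI).
Proof.
  unfold FT_re. rewrite Defs_RInt_continuous; auto. intros; apply continuous_mul_cos; auto.
Qed.

Lemma FT_im_RInt e :
  FT_im h (2 * PI) e = - (/ (2 * PI) * RInt (fun x => h x * sin (x * e)) (- (2 * PI)) (2 * PI)).
Proof.
  unfold FT_im. rewrite Defs_RInt_continuous; auto. intros; apply continuous_mul_sin; auto.
Qed.

Lemma izr_nat_diff j l : IZR (Z.of_nat j - Z.of_nat l) = INR j - INR l.
Proof. rewrite minus_IZR, <- !INR_IZR_INZ. reflexivity. Qed.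

Lemma RInt_psum_psum (g : R -> R) xi n :
  (forall y x, continuous (fun x => h x * g (x * y)) x) ->
  (forall y x, psum (fun j => psum (fun l => g (y - (INR j - INR l) * x)) n) n
                 = g y * fejer n x) ->
  psum (fun j => psum (fun l => RInt (fun x => h x * g (x * (xi - IZR (Z.of_nat j - Z.of_nat l))))
                                (- (2 * PI)) (2 * PI)) n) n
  = RInt (fun x => (h x * g (x * xi)) * fejer n x) (- (2 * PI)) (2 * PI).
Proof.
  intros Hg Hsum.
  rewrite (psum_ext _ (fun j =>
    RInt (fun x => psum (fun l => h x * g (x * (xi - (INR j - INR l)))) n) (- (2 * PI)) (2 * PI))).
  - rewrite <- (RInt_psum (fun j x => psum (fun l => h x * g (x * (xi - (INR j - INR l)))) n)).
    + apply RInt_ext. intros x _.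
      rewrite (psum_ext _ (fun j => h x * psum (fun l => g (x * xi - (INR j - INR l) * x)) n)).
      * rewrite psum_scal, Hsum. simpl. ring.
      * intros j _. rewrite <- psum_scal. apply psum_ext. intros l _. do 2 f_equal. ring.
    + intros j x. apply (continuous_psum (fun l x => h x * g (x * (xi - (INR j - INR l))))).
      intros; apply Hg.
  - intros j _. rewrite (RInt_psum (fun l x => h x * g (x * (xi - (INR j - INR l))))).
    + apply psum_ext. intros l _. rewrite izr_nat_diff. reflexivity.
    + intros; apply Hg.
Qed.

Lemma fejer_means_FT (F g : R -> R) c xi :
  (forall e, F e = c * (/ (2 * PI) * RInt (fun x => h x * g (x * e)) (- (2 * PI)) (2 * PI))) ->
  (forall y x, continuous (fun x => h x * g (x * y)) x) ->
  (forall y x n, psum (fun j => psum (fun l => g (y - (INR j - INR l) * x)) n) n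
                 = g y * fejer n x) ->
  is_lim_seq (fun N => psum (fun j => psum (fun l => F (xi - IZR (Z.of_nat j - Z.of_nat l)))
                                         (S N)) (S N) / INR (S N))
    (c * (h 0 * g 0)).
Proof.
  intros HF Hg Hsum. pose proof PI_RGT_0.
  apply is_lim_seq_ext with (fun N => c * / (2 * PI) *
     (RInt (fun x => h x * g (x * xi) * fejer (S N) x) (- (2 * PI)) (2 * PI) / INR (S N))).
  - intros N. symmetry. rewrite <- RInt_psum_psum by auto.
    rewrite (psum_ext _ (fun j => psum (fun l => c * / (2 * PI) *
      RInt (fun x => h x * g (x * (xi - IZR (Z.of_nat j - Z.of_nat l)))) (- (2 * PI)) (2 * PI))
      (S N))) by (intros; apply psum_ext; intros; rewrite HF; ring).
    rewrite psum_psum_scal. unfold Rdiv. ring.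
  - replace (Finite (c * (h 0 * g 0)))
      with (Rbar_mult (c * / (2 * PI)) (2 * PI * (h 0 * g (0 * xi)))).
    + apply is_lim_seq_scal_l, (fejer_approx_identity (fun x => h x * g (x * xi))); auto.
      intros x Hx. rewrite hsupp; auto. ring.
    + simpl. rewrite Rmult_0_l. f_equal. field. lra.
Qed.

Lemma poisson_FT_re xi s : is_zsum (fun k => FT_re h (2 * PI) (xi - IZR k)) s -> s = h 0.
Proof.
  intros Hs.
  assert (L := fejer_means_FT (FT_re h (2 * PI)) cos 1 xi
                 ltac:(intros; rewrite FT_re_RInt; ring)
                 (fun y x => continuous_mul_cos h y x (hc x)) psum_psum_cos_diff).
  pose proof (fejer_means_is_zsum _ _ Hs) as L'.
  apply is_lim_seq_unique in L, L'. rewrite L in L'. injection L'. intros <-.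
  rewrite cos_0. ring.
Qed.

Lemma poisson_FT_im xi s : is_zsum (fun k => FT_im h (2 * PI) (xi - IZR k)) s -> s = 0.
Proof.
  intros Hs.
  assert (L := fejer_means_FT (FT_im h (2 * PI)) sin (-1) xi
                 ltac:(intros; rewrite FT_im_RInt; ring)
                 (fun y x => continuous_mul_sin h y x (hc x)) psum_psum_sin_diff).
  pose proof (fejer_means_is_zsum _ _ Hs) as L'.
  apply is_lim_seq_unique in L, L'. rewrite L in L'. injection L'. intros <-.
  rewrite sin_0. ring.
Qed.
End PoissonSummation.

(** * The coefficients d_k against the symbol delta *)

Lemma Rpower_gt0 x y : 0 < Rpower x y.
Proof. apply exp_pos. Qed.

Lemma Rpower_Ropp_le1 x q : 1 <= x -> 0 <= q -> Rpower x (- q) <= 1.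
Proof.
  intros Hx Hq. rewrite Rpower_Ropp.
  assert (1 <= Rpower x q) by (rewrite <- (Rpower_O x) by lra; apply Rle_Rpower; lra).
  rewrite <- Rinv_1. apply Rinv_le_contravar; lra.
Qed.

Lemma Rpower_Ropp_le a b q : 0 < a <= b -> 0 <= q -> Rpower b (- q) <= Rpower a (- q).
Proof.
  intros Hab Hq. rewrite !Rpower_Ropp. apply Rinv_le_contravar; [apply Rpower_gt0|].
  apply Rle_Rpower_l; auto.
Qed.

Lemma Rpower_Ropp_lipschitz p a b c : 0 < p -> 0 < c -> c <= a -> c <= b ->
  Rabs (Rpower a (- p) - Rpower b (- p)) <= p * Rpower c (- p - 1) * Rabs (a - b).
Proof.
  intros Hp Hc Ha Hb.
  assert (Gen : forall a b, c <= a -> a < b ->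
     Rabs (Rpower a (- p) - Rpower b (- p)) <= p * Rpower c (- p - 1) * Rabs (a - b)).
  { clear a b Ha Hb. intros a b Ha Hab.
    destruct (MVT_cor2 (fun t => Rpower t (- p)) (fun t => - p * Rpower t (- p - 1)) a b Hab)
      as [t [Ht Ht2]]; [intros t Ht; apply derivable_pt_lim_power; lra|].
    rewrite Rabs_minus_sym, Ht, (Rabs_minus_sym a b), !Rabs_mult, Rabs_Ropp, (Rabs_right p),
      (Rabs_right (Rpower t _)) by (lra || left; apply Rpower_gt0).
    apply Rmult_le_compat_r; [apply Rabs_pos|]. apply Rmult_le_compat_l; [lra|].
    replace (- p - 1) with (- (p + 1)) by ring. apply Rpower_Ropp_le; lra. }
  destruct (Rtotal_order a b) as [H|[->|H]].
  - apply Gen; auto.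
  - rewrite !Rminus_diag, Rabs_R0, Rmult_0_r. lra.
  - rewrite Rabs_minus_sym, (Rabs_minus_sym a b). apply Gen; auto.
Qed.

Lemma dcoef_opp p dp dm k : dcoef p dp dm k = dcoef p dm dp (- k).
Proof. unfold dcoef. destruct k; reflexivity. Qed.

Lemma delta_opp p dp dm X : delta p dp dm X = delta p dm dp (- X).
Proof.
  unfold delta. destruct (Rlt_dec 0 X), (Rlt_dec 0 (- X)), (Rlt_dec X 0), (Rlt_dec (- X) 0);
    rewrite ?Ropp_involutive; lra || reflexivity.
Qed.

Lemma Rabs_dcoef_le p dp dm k : 0 < p -> Rabs (dcoef p dp dm k) <= Rabs dp + Rabs dm.
Proof.
  intros Hp. pose proof (Rabs_pos dp); pose proof (Rabs_pos dm).
  assert (Hd : forall d j, (0 < j)%Z -> Rabs (d * Rpower (IZR j) (- p)) <= Rabs d).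
  { intros d j Hj. rewrite Rabs_mult, (Rabs_right (Rpower _ _)) by (left; apply Rpower_gt0).
    assert (Rpower (IZR j) (- p) <= 1) by (apply Rpower_Ropp_le1; [apply IZR_le; lia | lra]).
    pose proof (Rabs_pos d). pose proof (Rpower_gt0 (IZR j) (- p)). nra. }
  unfold dcoef. destruct (0 <? k)%Z eqn:E1; [|destruct (k <? 0)%Z eqn:E2].
  - apply Z.ltb_lt in E1. pose proof (Hd dp k E1). lra.
  - apply Z.ltb_lt in E2. pose proof (Hd dm (- k)%Z ltac:(lia)). lra.
  - rewrite Rabs_R0; lra.
Qed.

Lemma Rabs_weight_le m y : (1 <= m)%nat -> Rabs y * weight (m + 2) y <= weight 2 y.
Proof.
  intros Hm. unfold weight. pose proof (Rabs_pos y). set (t := Rabs y) in *.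
  assert (Hm1 : 1 + t <= (1 + t) ^ m).
  { destruct m; [lia|]. simpl. pose proof (pow_R1_Rle (1 + t) m ltac:(lra)). nra. }
  assert (P2 : 0 < (1 + t) ^ 2) by (apply pow_lt; lra).
  rewrite pow_add, Rinv_mult.
  assert (t * / (1 + t) ^ m <= 1).
  { apply Rmult_le_reg_r with ((1 + t) ^ m); [lra|]. rewrite Rmult_assoc, Rinv_l by lra. lra. }
  pose proof (Rinv_0_lt_compat _ P2). nra.
Qed.

Lemma weight_far_le m y r : 0 <= r -> r <= Rabs y -> weight (m + 2) y <= weight m r * weight 2 y.
Proof.
  intros Hr Hy. unfold weight. pose proof (Rabs_pos y). rewrite (Rabs_right r) by lra.
  rewrite pow_add, Rinv_mult. apply Rmult_le_compat_r.
  - left; apply Rinv_0_lt_compat, pow_lt; lra.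
  - apply Rinv_le_contravar; [apply pow_lt; lra | apply pow_incr; lra].
Qed.

(* Near [X] the mean value theorem for [xi^(-p)] on [[X/2, +oo)] applies; elsewhere
   [|d_k - delta X| <= 2 S] and the weight is at most [weight m (X/2)]. *)
Definition gap_bound (p S : R) (m : nat) (X : R) :=
  S * p * Rpower (X / 2) (- p - 1) + 2 * S * weight m (X / 2).

Lemma gap_bound_ge0 p S m X : 0 < p -> 0 <= S -> 0 <= gap_bound p S m X.
Proof.
  intros Hp HS. unfold gap_bound. pose proof (Rpower_gt0 (X / 2) (- p - 1)).
  pose proof (weight_pos m (X / 2)). assert (0 <= S * p) by nra. nra.
Qed.

Lemma dcoef_delta_gap_pos p dp dm S m X k :
  0 < p -> (1 <= m)%nat -> Rabs dp + Rabs dm <= S -> 2 <= X ->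
  Rabs (dcoef p dp dm k - delta p dp dm X) * weight (m + 2) (X - IZR k)
    <= gap_bound p S m X * weight 2 (X - IZR k).
Proof.
  intros Hp Hm HS HX.
  set (y := X - IZR k). pose proof (Rabs_pos y) as Hy.
  pose proof (Rabs_pos dp); pose proof (Rabs_pos dm).
  pose proof (weight_pos (m + 2) y). pose proof (weight_pos 2 y).
  pose proof (Rpower_gt0 (X / 2) (- p - 1)). pose proof (weight_pos m (X / 2)).
  assert (Hdel : delta p dp dm X = dp * Rpower X (- p))
    by (unfold delta; destruct (Rlt_dec 0 X); [auto | lra]).
  unfold gap_bound. rewrite Hdel.
  destruct (Rlt_dec (X / 2) (IZR k)) as [Hk|Hk].
  - assert (Hk0 : (0 < k)%Z) by (apply lt_IZR; lra).
    assert (Hd : dcoef p dp dm k = dp * Rpower (IZR k) (- p))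
      by (unfold dcoef; apply Z.ltb_lt in Hk0; rewrite Hk0; auto).
    rewrite Hd, <- Rmult_minus_distr_l, Rabs_mult.
    pose proof (Rpower_Ropp_lipschitz p (IZR k) X (X / 2) Hp ltac:(lra) ltac:(lra) ltac:(lra))
      as HM.
    rewrite (Rabs_minus_sym (IZR k) X) in HM. fold y in HM.
    pose proof (Rabs_weight_le m y Hm).
    set (R0 := Rpower (X / 2) (- p - 1)) in *.
    assert (Rabs dp * Rabs (Rpower (IZR k) (- p) - Rpower X (- p)) <= S * (p * R0 * Rabs y))
      by (apply Rmult_le_compat; try lra; apply Rabs_pos).
    assert (0 <= S * p * R0) by (apply Rmult_le_pos; nra).
    assert (0 <= 2 * S * weight m (X / 2) * weight 2 y) by (apply Rmult_le_pos; nra).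
    apply Rle_trans with (S * p * R0 * (Rabs y * weight (m + 2) y)); nra.
  - assert (Hfar : X / 2 <= Rabs y) by (unfold y; rewrite Rabs_right; lra).
    pose proof (weight_far_le m y (X / 2) ltac:(lra) Hfar).
    assert (Hb : Rabs (dcoef p dp dm k - dp * Rpower X (- p)) <= 2 * S).
    { pose proof (Rabs_triang (dcoef p dp dm k) (- (dp * Rpower X (- p)))) as Htri.
      rewrite Rabs_Ropp, Rabs_mult, (Rabs_right (Rpower _ _)) in Htri by (left; apply Rpower_gt0).
      pose proof (Rabs_dcoef_le p dp dm k Hp).
      assert (Rpower X (- p) <= 1) by (apply Rpower_Ropp_le1; lra).
      pose proof (Rpower_gt0 X (- p)). unfold Rminus. nra. }
    assert (0 <= S * p) by nra.
    assert (0 <= S * p * Rpower (X / 2) (- p - 1) * weight 2 y) by (apply Rmult_le_pos; nra).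
    apply Rle_trans with (2 * S * (weight m (X / 2) * weight 2 y)); [|nra].
    apply Rmult_le_compat; auto; apply Rabs_pos || lra.
Qed.

Lemma dcoef_delta_gap p dp dm S m X k :
  0 < p -> (1 <= m)%nat -> Rabs dp + Rabs dm <= S -> 2 <= Rabs X ->
  Rabs (dcoef p dp dm k - delta p dp dm X) * weight (m + 2) (X - IZR k)
    <= gap_bound p S m (Rabs X) * weight 2 (X - IZR k).
Proof.
  intros Hp Hm HS HX. destruct (Rle_dec 0 X).
  - rewrite (Rabs_right X) in * by lra. apply dcoef_delta_gap_pos; auto.
  - rewrite (Rabs_left X) in * by lra.
    rewrite dcoef_opp, delta_opp.
    replace (X - IZR k) with (- (- X - IZR (- k))) by (rewrite opp_IZR; ring).
    rewrite !weight_opp. apply dcoef_delta_gap_pos; auto. lra.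
Qed.

Lemma gap_bound_le p S m X : 0 < p -> p + 1 <= INR m -> 0 <= S -> 2 <= X ->
  gap_bound p S m X <= (S * p * Rpower (/ 2) (- p - 1) + 2 * S * 2 ^ m) * (Rpower X (- p) / X).
Proof.
  intros Hp Hm HS HX. unfold gap_bound.
  assert (E1 : Rpower (X / 2) (- p - 1) = Rpower (/ 2) (- p - 1) * (Rpower X (- p) / X)).
  { unfold Rdiv. rewrite <- Rpower_mult_distr by lra.
    replace (- p - 1) with (- p + - (1)) by ring.
    rewrite Rpower_plus, (Rpower_Ropp X 1), Rpower_1 by lra. ring. }
  assert (E2 : weight m (X / 2) <= 2 ^ m * (Rpower X (- p) / X)).
  { assert (HXm : Rpower X p * X <= X ^ m).
    { rewrite <- Rpower_pow by lra. rewrite <- (Rpower_1 X) at 2 by lra. rewrite <- Rpower_plus.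
      apply Rle_Rpower; lra. }
    assert (H1 : (X / 2) ^ m <= (1 + X / 2) ^ m) by (apply pow_incr; lra).
    assert (H2 : (X / 2) ^ m = X ^ m / 2 ^ m)
      by (unfold Rdiv; rewrite Rpow_mult_distr, pow_inv; auto).
    pose proof (Rpower_gt0 X p).
    assert (0 < 2 ^ m) by (apply pow_lt; lra).
    assert (0 < X ^ m) by (apply pow_lt; lra).
    unfold weight. rewrite Rabs_right, Rpower_Ropp by lra. unfold Rdiv.
    apply Rle_trans with (/ (X ^ m / 2 ^ m)).
    - apply Rinv_le_contravar; [apply Rdiv_lt_0_compat|]; lra.
    - replace (/ (X ^ m / 2 ^ m)) with (2 ^ m * / X ^ m) by (field; lra).
      apply Rmult_le_compat_l; [lra|].
      rewrite <- Rinv_mult. apply Rinv_le_contravar; [apply Rmult_lt_0_compat|]; lra. }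
  rewrite E1. pose proof (Rpower_gt0 (/ 2) (- p - 1)). pose proof (Rpower_gt0 X (- p)).
  assert (0 <= S * p) by nra. nra.
Qed.

Lemma gap_bound_decay p S m : 0 < p -> p + 1 <= INR m -> 0 <= S ->
  exists A, 0 <= A /\ forall X, 2 <= X -> gap_bound p S m X <= A * (Rpower X (- p) / X).
Proof.
  intros Hp Hm HS. exists (S * p * Rpower (/ 2) (- p - 1) + 2 * S * 2 ^ m). split.
  - pose proof (Rpower_gt0 (/ 2) (- p - 1)). pose proof (pow_lt 2 m ltac:(lra)).
    assert (0 <= S * p) by nra. nra.
  - intros X HX. apply gap_bound_le; auto.
Qed.

Lemma Rpower_div_le p C eps X : 0 <= C -> 0 < eps -> C / eps < X ->
  C * (Rpower X (- p) / X) <= eps * Rpower X (- p).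
Proof.
  intros HC Heps HX.
  assert (HX0 : 0 < X) by (pose proof (Rdiv_le_0_compat C eps HC Heps); lra).
  pose proof (Rpower_gt0 X (- p)).
  replace (C * (Rpower X (- p) / X)) with (C / X * Rpower X (- p)) by (field; lra).
  apply Rmult_le_compat_r; [lra|].
  apply (Rmult_le_reg_r X); [lra|]. unfold Rdiv. rewrite Rmult_assoc, Rinv_l, Rmult_1_r by lra.
  apply (Rmult_lt_compat_l eps) in HX; [|lra].
  replace (eps * (C / eps)) with C in HX by (field; lra). lra.
Qed.

(** * Asymptotics of hat D_1 *)

Lemma weight_bound_ge0 (a : Z -> R) K n xi :
  (forall k, Rabs (a k) <= K * weight n (xi - IZR k)) -> 0 <= K.
Proof.
  intros Ha. pose proof (Ha 0%Z). pose proof (Rabs_pos (a 0%Z)).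
  pose proof (weight_pos n (xi - 0)). nra.
Qed.

Lemma is_zsum_weight_bounded (a : Z -> R) K m xi :
  (forall k, Rabs (a k) <= K * weight (m + 2) (xi - IZR k)) -> exists s, is_zsum a s.
Proof.
  intros Ha. destruct (is_zsum_weight2 xi) as [sv [Hsv _]].
  pose proof (weight_bound_ge0 a K (m + 2) xi Ha) as HK.
  destruct (is_zsum_dominated a (fun k => K * weight 2 (xi - IZR k)) (K * sv)) as [s [Hs _]].
  - intros k. eapply Rle_trans; [apply Ha|]. apply Rmult_le_compat_l; [lra|]. apply weight_le. lia.
  - apply is_zsum_scal; auto.
  - exists s; auto.
Qed.

Lemma zsum_dcoef_sub_delta (a : Z -> R) p dp dm K m xi s :
  0 < p -> (1 <= m)%nat -> 2 <= Rabs xi ->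
  (forall k, Rabs (a k) <= K * weight (m + 2) (xi - IZR k)) -> is_zsum a s ->
  Rabs (zsum (fun k => dcoef p dp dm k * a k) - delta p dp dm xi * s)
    <= 4 * PI * K * gap_bound p (Rabs dp + Rabs dm) m (Rabs xi).
Proof.
  intros Hp Hm Hxi Ha Hs.
  set (c := gap_bound p (Rabs dp + Rabs dm) m (Rabs xi)).
  assert (Hc : 0 <= c)
    by (apply gap_bound_ge0; [lra | pose proof (Rabs_pos dp); pose proof (Rabs_pos dm); lra]).
  pose proof (weight_bound_ge0 a K (m + 2) xi Ha) as HK.
  destruct (is_zsum_weight2 xi) as [sv [Hsv Hsv4]].
  set (dl := delta p dp dm xi).
  destruct (is_zsum_dominated (fun k => (dcoef p dp dm k - dl) * a k)
             (fun k => K * c * weight 2 (xi - IZR k)) (K * c * sv)) as [St [HSt BSt]].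
  - intros k. rewrite Rabs_mult.
    pose proof (dcoef_delta_gap p dp dm _ m xi k Hp Hm (Rle_refl _) Hxi) as Hgap. fold c dl in Hgap.
    pose proof (Rabs_pos (dcoef p dp dm k - dl)).
    apply Rle_trans with (Rabs (dcoef p dp dm k - dl) * (K * weight (m + 2) (xi - IZR k))).
    + apply Rmult_le_compat_l; auto.
    + nra.
  - apply is_zsum_scal; auto.
  - rewrite (is_zsum_unique _ (St + dl * s)).
    + assert (0 <= K * c) by nra.
      replace (St + dl * s - dl * s) with St by ring. nra.
    + apply (is_zsum_ext (fun k => (dcoef p dp dm k - dl) * a k + dl * a k)); [intros; ring|].
      apply is_zsum_plus, is_zsum_scal; auto.
Qed.

Lemma sqrt_Rsqr_plus_le a b : sqrt (Rsqr a + Rsqr b) <= Rabs a + Rabs b.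
Proof.
  pose proof (Rabs_pos a); pose proof (Rabs_pos b).
  rewrite <- (sqrt_Rsqr (Rabs a + Rabs b)) by lra.
  apply sqrt_le_1_alt. rewrite (Rsqr_abs a), (Rsqr_abs b). unfold Rsqr. nra.
Qed.

Lemma D1_hat_bound p dp dm (h0 zeta : R -> R) K m xi :
  0 < p -> (1 <= m)%nat ->
  (forall x, continuous h0 x) -> h0 0 = 1 -> (forall x, 3 * PI / 2 < Rabs x -> h0 x = 0) ->
  (forall e, Rabs (FT_re h0 (2 * PI) e) <= K * weight (m + 2) e /\
             Rabs (FT_im h0 (2 * PI) e) <= K * weight (m + 2) e) ->
  zeta xi = 1 -> 2 <= Rabs xi ->
  sqrt (Rsqr (D1_hat_re p dp dm h0 zeta xi) + Rsqr (D1_hat_im p dp dm h0 zeta xi))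
    <= 8 * PI * K * gap_bound p (Rabs dp + Rabs dm) m (Rabs xi).
Proof.
  intros Hp Hm Hc Hh1 Hsupp HK Hzeta Hxi.
  assert (Hre : forall k, Rabs (FT_re h0 (2 * PI) (xi - IZR k)) <= K * weight (m + 2) (xi - IZR k))
    by (intros; apply HK).
  assert (Him : forall k, Rabs (FT_im h0 (2 * PI) (xi - IZR k)) <= K * weight (m + 2) (xi - IZR k))
    by (intros; apply HK).
  destruct (is_zsum_weight_bounded _ _ _ _ Hre) as [sa Hsa].
  destruct (is_zsum_weight_bounded _ _ _ _ Him) as [sb Hsb].
  pose proof (zsum_dcoef_sub_delta _ p dp dm _ _ _ _ Hp Hm Hxi Hre Hsa) as Bre.
  pose proof (zsum_dcoef_sub_delta _ p dp dm _ _ _ _ Hp Hm Hxi Him Hsb) as Bim.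
  rewrite (poisson_FT_re h0 Hc Hsupp xi sa Hsa), Hh1, Rmult_1_r in Bre.
  rewrite (poisson_FT_im h0 Hc Hsupp xi sb Hsb), Rmult_0_r, Rminus_0_r in Bim.
  unfold D1_hat_re, D1_hat_im, Dh0_hat_re, Dh0_hat_im. rewrite Hzeta, Rmult_1_l.
  eapply Rle_trans; [apply sqrt_Rsqr_plus_le | lra].
Qed.

Theorem mainTheorem3 (p dp dm : R) (h0 zeta : R -> R) :
  1/2 < p ->
  smooth h0 ->
  (forall x, - PI <= x <= PI -> h0 x = 1) ->
  (forall x, 3 * PI / 2 < Rabs x -> h0 x = 0) ->
  smooth zeta ->
  (exists r, 0 < r /\ forall x, Rabs x < r -> zeta x = 0) ->
  (exists M, forall x, M < Rabs x -> zeta x = 1) ->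
  forall eps, 0 < eps ->
    exists M, forall xi, M < Rabs xi ->
      sqrt (Rsqr (D1_hat_re p dp dm h0 zeta xi) + Rsqr (D1_hat_im p dp dm h0 zeta xi))
        <= eps * Rpower (Rabs xi) (- p).
Proof.
  (* Only [zeta = 1] near infinity matters for large [|xi|]. *)
  intros Hp Hh Hh1 Hsupp _ _ [Mz Hz] eps Heps. pose proof PI_RGT_0.
  destruct (INR_unbounded (p + 1)) as [m Hm].
  assert (Hm1 : (1 <= m)%nat) by (destruct m; [simpl in Hm; lra | lia]).
  destruct (FT_smooth_decay h0 (3 * PI / 2) (2 * PI) (m + 2) Hh ltac:(lra) Hsupp) as [K HK].
  pose proof (weight_bound_ge0 _ K (m + 2) 0 (fun k => proj1 (HK (0 - IZR k)))) as HK0.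
  set (S := Rabs dp + Rabs dm).
  assert (HS : 0 <= S) by (unfold S; pose proof (Rabs_pos dp); pose proof (Rabs_pos dm); lra).
  destruct (gap_bound_decay p S m ltac:(lra) ltac:(lra) HS) as [A [HA0 HA]].
  assert (HKA : 0 <= 8 * PI * K * A) by (assert (0 <= PI * K) by nra; nra).
  exists (2 + Rabs Mz + 8 * PI * K * A / eps). intros xi Hxi.
  pose proof (Rle_abs Mz). pose proof (Rabs_pos Mz).
  pose proof (Rdiv_le_0_compat _ eps HKA Heps).
  apply Rle_trans with (8 * PI * K * gap_bound p S m (Rabs xi)).
  { apply D1_hat_bound; auto; try lra.
    - apply smooth_continuous; auto.
    - apply Hh1; lra.
    - apply Hz; lra. }
  apply Rle_trans with (8 * PI * K * A * (Rpower (Rabs xi) (- p) / Rabs xi)).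
  - rewrite (Rmult_assoc (8 * PI * K) A). apply Rmult_le_compat_l; [nra|]. apply HA. lra.
  - apply Rpower_div_le; auto. lra.
Qed.
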